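(* Fix a dataset $\mathbb D_N$ and a point $x\in\mathcal X$. Let $\lambda_\dagger(x|\mathbb D_N)$ be the minimum eigenvalue of the feasibility tradeoff matrix $\mathcal F(x|\mathbb D_N)=\beta^2\Sigma_{L_gB}(x|\mathbb D_N)-\widehat{L_gB}(x|\mathbb D_N)^T\widehat{L_gB}(x|\mathbb D_N)$, and let $e_\dagger(x|\mathbb D_N)$ be an associated unit eigenvector. Suppose $\lambda_\dagger(x|\mathbb D_N)<0$. Then: - the GP-CBF-SOCP is feasible at $x$; and - there exists $\alpha_{\min}>0$ such that for every $\alpha>\alpha_{\min}$, the input $$u_{\text{safe}}(x)=\alpha\,\mathrm{sgn}\big(\widehat{L_gB}(x|\mathbb D_N)e_\dagger(x|\mathbb D_N)\big)\,e_\dagger(x|\mathbb D_N)$$ is a feasible solution of the GP-CBF-SOCP at $x$.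
   Context: Consider $\dot x=f(x)+g(x)u$ with $x\in\mathcal X\subset\mathbb R^n$ and $u\in\mathbb R^m$, where $f,g$ are locally Lipschitz and unknown. A nominal model $\tilde f,\tilde g$ is available. Let $B:\mathcal X\to\mathbb R$ be $C^1$, let $\gamma$ be extended class-$\mathcal K_\infty$, and let $u_{\text{ref}}$ be a reference controller. Lie derivatives: $L_{\tilde f}B=\nabla B\,\tilde f$ and $L_{\tilde g}B=\nabla B\,\tilde g\in\mathbb R^{1\times m}$; $L_fB$ and $L_gB$ are defined similarly. Set $\Delta_B(x,u)=(L_fB-L_{\tilde f}B)(x)+(L_gB-L_{\tilde g}B)(x)u$. A dataset $\mathbb D_N=\{((x_j,u_j),z_j)\}$ consists of $z_j=\Delta_B(x_j,u_j)+\epsilon_j$. GP model with the affine dot product kernel $k_c((x,y),(x',y'))=y^T\mathrm{diag}(k_1(x,x'),\dots,k_{m+1}(x,x'))y'$: - Let $y_j=[1,u_j^T]^T$, $\mathbf z=(z_j)$, let $\sigma_n>0$, and let $K_c$ be the Gram matrix of $k_c$ on the data. - Let $K_{**}(x)=\mathrm{diag}(k_i(x,x))$, and let $K_{*Y}(x)\in\mathbb R^{(m+1)\times N}$ have entries $k_i(x,x_j)(y_j)_i$. - Define $m_B(x|\mathbb D_N)=K_{*Y}(K_c+\sigma_n^2I)^{-1}\mathbf z$ and $\Sigma_B(x|\mathbb D_N)=K_{**}-K_{*Y}(K_c+\sigma_n^2I)^{-1}K_{*Y}^T$, which is positive definite. - The posterior mean and standard deviation are $\mu_B(x,u|\mathbb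 D_N)=m_B^T[1;u]$ and $\sigma_B(x,u|\mathbb D_N)=\sqrt{[1,u^T]\Sigma_B[1;u]}$. $\beta>0$ is a constant. Derived quantities: - $\widehat{L_fB}(x|\mathbb D_N)=L_{\tilde f}B(x)+(m_B)_1$ and $\widehat{L_gB}(x|\mathbb D_N)=L_{\tilde g}B(x)+((m_B)_2,\dots,(m_B)_{m+1})$. - $\Sigma_{L_gB}(x|\mathbb D_N)$ is the lower-right $m\times m$ block (rows and columns $2,\dots,m+1$) of $\Sigma_B(x|\mathbb D_N)$. The GP-CBF-SOCP at $x$ is: minimize $\|u-u_{\text{ref}}(x)\|_2^2$ over $u\in\mathbb R^m$ subject to $L_{\tilde f}B(x)+L_{\tilde g}B(x)u+\mu_B(x,u|\mathbb D_N)-\beta\sigma_B(x,u|\mathbb D_N)+\gamma(B(x))\ge0$. It is feasible at $x$ if some $u$ satisfies the constraint. *)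

From HB Require Import structures.
From mathcomp Require Import all_boot all_order all_algebra.
From mathcomp Require Import all_classical all_reals all_analysis.
Set Implicit Arguments. Unset Strict Implicit. Unset Printing Implicit Defensive.
Import Order.TTheory GRing.Theory Num.Theory.
Import numFieldNormedType.Exports.
Local Open Scope ring_scope.

Section GPCBF.
Variables (R : realType) (n m N : nat).

(** Lie derivatives along a vector field, via the directional derivative
    'D_v B x = nabla B(x) . v *)
Definition LieF (B : 'cV[R]_n -> R) (f : 'cV[R]_n -> 'cV[R]_n) (x : 'cV[R]_n) : R :=
  'D_(f x) B x.
Definition LieG (B : 'cV[R]_n -> R) (g : 'cV[R]_n -> 'M[R]_(n, m)) (x : 'cV[R]_n)
  : 'rV[R]_m := \row_j 'D_(col j (g x)) B x.

Definition ext_classKinf (gam : R -> R) : Prop :=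
  continuous gam /\ gam 0 = 0 /\ {homo gam : a b / a < b} /\
  (forall M : R, exists r : R, M < gam r) /\ (forall M : R, exists r : R, gam r < M).

Definition aug (u : 'cV[R]_m) : 'cV[R]_(1 + m) := col_mx (const_mx 1) u.

(** GP with the affine dot product kernel; kernels k i, i = 1..m+1 (indexed by 'I_(1+m)),
    data points xs j, inputs us j, measurements z (j : 'I_N), noise level sn. *)
Variables (k : 'I_(1 + m) -> 'cV[R]_n -> 'cV[R]_n -> R)
          (xs : 'I_N -> 'cV[R]_n) (us : 'I_N -> 'cV[R]_m) (z : 'cV[R]_N) (sn : R).

Definition Kc : 'M[R]_N :=
  \matrix_(j, l) \sum_(i < 1 + m) (aug (us j)) i 0 * k i (xs j) (xs l) * (aug (us l)) i 0.

Definition Kss (x : 'cV[R]_n) : 'M[R]_(1 + m) := diag_mx (\row_i k i x x).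

Definition KsY (x : 'cV[R]_n) : 'M[R]_(1 + m, N) :=
  \matrix_(i, j) (k i x (xs j) * (aug (us j)) i 0).

Definition mB (x : 'cV[R]_n) : 'cV[R]_(1 + m) :=
  KsY x *m invmx (Kc + sn ^+ 2 *: 1%:M) *m z.

Definition SigmaB (x : 'cV[R]_n) : 'M[R]_(1 + m) :=
  Kss x - KsY x *m invmx (Kc + sn ^+ 2 *: 1%:M) *m (KsY x)^T.

Definition muB (x : 'cV[R]_n) (u : 'cV[R]_m) : R := ((mB x)^T *m aug u) 0 0.

Definition sigmaB (x : 'cV[R]_n) (u : 'cV[R]_m) : R :=
  Num.sqrt (((aug u)^T *m SigmaB x *m aug u) 0 0).

Definition LgB_hat (LgtB : 'rV[R]_m) (x : 'cV[R]_n) : 'rV[R]_m :=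
  LgtB + (dsubmx (mB x))^T.

Definition Sigma_LgB (x : 'cV[R]_n) : 'M[R]_m := drsubmx (SigmaB x).

Definition Ftrade (beta : R) (LgtB : 'rV[R]_m) (x : 'cV[R]_n) : 'M[R]_m :=
  beta ^+ 2 *: Sigma_LgB x - (LgB_hat LgtB x)^T *m LgB_hat LgtB x.

(** the GP-CBF-SOCP constraint at x, given the nominal Lie derivatives
    LftB = L_{f~}B(x), LgtB = L_{g~}B(x) and Bx = B(x) *)
Definition socp_constraint (beta : R) (gam : R -> R) (LftB : R) (LgtB : 'rV[R]_m)
  (Bx : R) (x : 'cV[R]_n) (u : 'cV[R]_m) : Prop :=
  0 <= LftB + (LgtB *m u) 0 0 + muB x u - beta * sigmaB x u + gam Bx.

Definition socp_feasible beta gam LftB LgtB Bx x : Prop :=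
  exists u : 'cV[R]_m, socp_constraint beta gam LftB LgtB Bx x u.

End GPCBF.

Definition is_min_eigenvalue (R : realType) (p : nat) (A : 'M[R]_p) (lam : R) : Prop :=
  eigenvalue A lam /\ (forall mu : R, eigenvalue A mu -> lam <= mu).

Definition is_unit_eigenvector (R : realType) (p : nat) (A : 'M[R]_p) (lam : R)
  (e : 'cV[R]_p) : Prop :=
  A *m e = lam *: e /\ \sum_(i < p) e i 0 ^+ 2 = 1.

From HB Require Import structures.
From mathcomp Require Import all_boot all_order all_algebra.
From mathcomp Require Import all_classical all_reals all_analysis.
From mathcomp Require Import ring lra.
Import Order.TTheory GRing.Theory Num.Theory.
Import numFieldNormedType.Exports.

(* Along the ray u = t e the constraint reads
   C + t p - beta * sqrt (c + b t + q t^2) >= 0, with p = \widehat{L_gB} e and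
   q = e^T Sigma_{L_gB} e.  The eigen-equation of the tradeoff matrix gives
   p^2 = beta^2 q - lam > beta^2 q, so for t = alpha sgn(p) the affine part grows
   like alpha |p| while the square root grows only like alpha beta sqrt q: the gap
   -lam alpha^2 between the squares eventually dominates every lower-order term. *)

Set Implicit Arguments.
Unset Strict Implicit.
Unset Printing Implicit Defensive.
Local Open Scope ring_scope.
Local Open Scope classical_set_scope.

Section SqrtBounds.
Variable R : rcfType.
Implicit Types beta S T C c b q p d a y : R.

Lemma ler_mul_sqrt beta S T :
  0 <= beta -> 0 <= T -> beta ^+ 2 * S <= T ^+ 2 -> beta * Num.sqrt S <= T.
Proof.
move=> beta_ge0 T_ge0 le_ST.
rewrite -(ger0_norm beta_ge0) -sqrtr_sqr -sqrtrM ?sqr_ge0 //.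
by rewrite -(ger0_norm T_ge0) -sqrtr_sqr; exact: ler_wsqrtr.
Qed.

Lemma affine_ge_sqrt_quadratic C c b q p d beta :
  0 < p -> 0 < beta -> 0 < d -> p ^+ 2 = beta ^+ 2 * q + d ->
  exists2 amin, 0 < amin & forall a y, amin < a -> `|y| <= a * `|b| ->
    beta * Num.sqrt (c + y + a ^+ 2 * q) <= C + a * p.
Proof.
move=> p_gt0 beta_gt0 d_gt0 p2E.
(* For a >= 1, every term of (C + a p)^2 - beta^2 (c + y + a^2 q) other than
   C^2 + a^2 d is bounded below by -a K. *)
set K := 2 * `|C| * p + beta ^+ 2 * `|c| + beta ^+ 2 * `|b|.
have beta2_gt0 : 0 < beta ^+ 2 by rewrite exprn_gt0.
have K_ge0 : 0 <= K by rewrite /K !addr_ge0 // !mulr_ge0 // ltW.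
have Kd_ge0 : 0 <= K / d by exact: divr_ge0 K_ge0 (ltW d_gt0).
have Cp_ge0 : 0 <= `|C| / p by exact: divr_ge0 (normr_ge0 C) (ltW p_gt0).
exists (1 + K / d + `|C| / p); first lra.
move=> a y lt_amin_a le_y.
have a_ge1 : 1 <= a by lra.
have le_K : K <= a * d by rewrite -ler_pdivrMr //; lra.
have le_C : `|C| <= a * p by rewrite -ler_pdivrMr //; lra.
have le_NC : - C <= `|C| by rewrite -normrN ler_norm.
apply: ler_mul_sqrt; [exact: ltW | lra |].
have le_c : beta ^+ 2 * c <= a * (beta ^+ 2 * `|c|).
  have : c <= a * `|c| by have := ler_norm c; have := normr_ge0 c; nra.
  nra.
have le_by : beta ^+ 2 * y <= a * (beta ^+ 2 * `|b|).
  rewrite mulrCA; apply: ler_wpM2l; first exact: ltW.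
  exact: le_trans (ler_norm y) le_y.
have le_Cp : - (2 * a * C * p) <= a * (2 * `|C| * p).
  have : 0 <= 2 * a * p by rewrite !mulr_ge0 ?ltW //; lra.
  nra.
have le_aK : a * K <= a * (a * d) by rewrite ler_wpM2l //; lra.
have expand : (C + a * p) ^+ 2 - beta ^+ 2 * (c + y + a ^+ 2 * q)
    = C ^+ 2 + a ^+ 2 * d - beta ^+ 2 * c - beta ^+ 2 * y + 2 * a * C * p.
  by rewrite sqrrD exprMn p2E; ring.
rewrite -subr_ge0 expand.
have -> : a ^+ 2 * d = a * (a * d) by ring.
have aKE : a * K = a * (2 * `|C| * p) + a * (beta ^+ 2 * `|c|) + a * (beta ^+ 2 * `|b|).
  by rewrite /K; ring.
have := sqr_ge0 C.
lra.
Qed.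

End SqrtBounds.

Lemma quad_form_affine (R : comPzRingType) p (S : 'M[R]_p) (v w : 'cV[R]_p) (t : R) :
  ((v + t *: w)^T *m S *m (v + t *: w)) 0 0 =
  (v^T *m S *m v) 0 0 + t * ((v^T *m S *m w) 0 0 + (w^T *m S *m v) 0 0)
  + t ^+ 2 * (w^T *m S *m w) 0 0.
Proof.
have -> : (v + t *: w)^T = v^T + t *: w^T by rewrite linearD linearZ.
rewrite !mulmxDl !mulmxDr -!scalemxAl -!scalemxAr !scalerA.
by rewrite !mxE; ring.
Qed.

Lemma quad_form_col_mx0 (R : pzRingType) p q (S : 'M[R]_(p + q)) (e : 'cV[R]_q) :
  (col_mx 0 e)^T *m S *m col_mx 0 e = e^T *m drsubmx S *m e.
Proof.
rewrite tr_col_mx trmx0 -[S]submxK mul_row_block mul_row_col.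
by rewrite !mul0mx !add0r mulmx0 add0r block_mxKdr.
Qed.

Lemma quad_form_eigenvector (R : comPzRingType) p (A : 'M[R]_p) lam (e : 'cV[R]_p) :
  A *m e = lam *: e -> (e^T *m e) 0 0 = 1 -> (e^T *m A *m e) 0 0 = lam.
Proof. by move=> Ae e1; rewrite -mulmxA Ae -scalemxAr mxE e1 mulr1. Qed.

Lemma quad_form_gram (R : comPzRingType) p (L : 'rV[R]_p) (e : 'cV[R]_p) :
  (e^T *m (L^T *m L) *m e) 0 0 = (L *m e) 0 0 ^+ 2.
Proof. by rewrite !mulmxA -mulmxA -trmx_mul mxE big_ord1 mxE expr2. Qed.

Lemma trmx_mul_self (R : comPzRingType) p (e : 'cV[R]_p) :
  (e^T *m e) 0 0 = \sum_(i < p) e i 0 ^+ 2.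
Proof. by rewrite mxE; apply: eq_bigr => i _; rewrite mxE expr2. Qed.

Lemma unit_eigenvector_neq0 (R : realType) p (A : 'M[R]_p) lam e :
  is_unit_eigenvector A lam e -> e != 0.
Proof.
case=> _ e_unit; apply: contra_neq (oner_neq0 R) => e0.
by rewrite -e_unit e0 big1 // => i _; rewrite mxE expr2 mulr0.
Qed.

Lemma unit_eigenvector_quad_form (R : realType) p (A : 'M[R]_p) lam e :
  is_unit_eigenvector A lam e -> (e^T *m A *m e) 0 0 = lam.
Proof. by case=> Ae e_unit; rewrite (quad_form_eigenvector Ae) // trmx_mul_self. Qed.

Section GPRay.
Variables (R : realType) (n m N : nat).
Variables (k : 'I_(1 + m) -> 'cV[R]_n -> 'cV[R]_n -> R)
          (xs : 'I_N -> 'cV[R]_n) (us : 'I_N -> 'cV[R]_m) (z : 'cV[R]_N) (sn : R).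
Variables (x : 'cV[R]_n) (e : 'cV[R]_m).

Lemma aug_scale (t : R) : aug (t *: e) = aug 0 + t *: col_mx 0 e.
Proof. by rewrite /aug scale_col_mx add_col_mx scaler0 !add0r addr0. Qed.

Lemma muB_scale (t : R) :
  muB k xs us z sn x (t *: e) =
  muB k xs us z sn x 0 + t * ((dsubmx (mB k xs us z sn x))^T *m e) 0 0.
Proof.
have mB_e : (mB k xs us z sn x)^T *m col_mx 0 e = (dsubmx (mB k xs us z sn x))^T *m e.
  by rewrite -{1}[mB _ _ _ _ _ _]vsubmxK tr_col_mx mul_row_col mulmx0 add0r.
rewrite /muB aug_scale mulmxDr -scalemxAr mB_e [LHS]mxE; congr (_ + _); exact: mxE.
Qed.

Lemma sigmaB_scale (t : R) :
  sigmaB k xs us sn x (t *: e) = Num.sqrt (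
    ((aug 0)^T *m SigmaB k xs us sn x *m aug 0) 0 0
    + t * (((aug 0)^T *m SigmaB k xs us sn x *m col_mx 0 e) 0 0
           + ((col_mx 0 e)^T *m SigmaB k xs us sn x *m aug 0) 0 0)
    + t ^+ 2 * (e^T *m Sigma_LgB k xs us sn x *m e) 0 0).
Proof. by rewrite /sigmaB aug_scale quad_form_affine quad_form_col_mx0. Qed.

Lemma socp_constraint_scale beta gam LftB LgtB Bx (t : R) :
  socp_constraint k xs us z sn beta gam LftB LgtB Bx x (t *: e) <->
  0 <= LftB + muB k xs us z sn x 0 + gam Bx
       + t * (LgB_hat k xs us z sn LgtB x *m e) 0 0
       - beta * sigmaB k xs us sn x (t *: e).
Proof.
rewrite /socp_constraint muB_scale /LgB_hat mulmxDl -scalemxAr !mxE.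
by split; nra.
Qed.

Lemma Ftrade_quad_form beta LgtB :
  (e^T *m Ftrade k xs us z sn beta LgtB x *m e) 0 0 =
  beta ^+ 2 * (e^T *m Sigma_LgB k xs us sn x *m e) 0 0
  - (LgB_hat k xs us z sn LgtB x *m e) 0 0 ^+ 2.
Proof.
rewrite /Ftrade mulmxBr mulmxBl -scalemxAr -scalemxAl -quad_form_gram [LHS]mxE.
by congr (_ + _); exact: mxE.
Qed.

End GPRay.

Theorem lemma4 (R : realType) (n m N : nat)
  (X : set 'cV[R]_n)
  (ft : 'cV[R]_n -> 'cV[R]_n) (gt : 'cV[R]_n -> 'M[R]_(n, m))
  (B : 'cV[R]_n -> R)
  (HB1 : forall y, differentiable B y)
  (HB2 : forall v : 'cV[R]_n, continuous (fun y => 'D_v B y))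
  (gam : R -> R) (Hgam : ext_classKinf gam)
  (beta : R) (Hbeta : 0 < beta)
  (k : 'I_(1 + m) -> 'cV[R]_n -> 'cV[R]_n -> R)
  (xs : 'I_N -> 'cV[R]_n) (us : 'I_N -> 'cV[R]_m) (z : 'cV[R]_N) (sn : R)
  (Hsn : 0 < sn) (Hxs : forall j, X (xs j))
  (x : 'cV[R]_n) (Hx : X x)
  (HSigma : forall v : 'cV[R]_(1 + m), v != 0 ->
      0 < (v^T *m SigmaB k xs us sn x *m v) 0 0)
  (lam : R) (e : 'cV[R]_m)
  (Hlam : is_min_eigenvalue (Ftrade k xs us z sn beta (LieG B gt x) x) lam)
  (He : is_unit_eigenvector (Ftrade k xs us z sn beta (LieG B gt x) x) lam e)
  (Hneg : lam < 0) :
  socp_feasible k xs us z sn beta gam (LieF B ft x) (LieG B gt x) (B x) x /\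
  exists alpha_min : R, 0 < alpha_min /\
    forall alpha : R, alpha_min < alpha ->
      socp_constraint k xs us z sn beta gam (LieF B ft x) (LieG B gt x) (B x) x
        ((alpha * Num.sg ((LgB_hat k xs us z sn (LieG B gt x) x *m e) 0 0)) *: e).
Proof.
set p0 : R := (LgB_hat k xs us z sn (LieG B gt x) x *m e) 0 0.
set q : R := (e^T *m Sigma_LgB k xs us sn x *m e) 0 0.
have q_gt0 : 0 < q.
  rewrite /q -quad_form_col_mx0; apply: HSigma.
  by rewrite col_mx_eq0 eqxx (unit_eigenvector_neq0 He).
have p0_sqr : p0 ^+ 2 = beta ^+ 2 * q + - lam.
  by rewrite -(unit_eigenvector_quad_form He) Ftrade_quad_form -/p0 -/q; ring.
have p0_norm_sqr : `|p0| ^+ 2 = beta ^+ 2 * q + - lam by rewrite real_normK ?num_real.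
have p0_neq0 : p0 != 0.
  apply/eqP => p0_eq0; have := mulr_gt0 (exprn_gt0 2 Hbeta) q_gt0.
  by move: p0_sqr; rewrite p0_eq0 expr0n /=; lra.
have p0_norm_gt0 : 0 < `|p0| by rewrite normr_gt0.
have neg_lam_gt0 : 0 < - lam by rewrite oppr_gt0.
have [amin amin_gt0 dominate] := affine_ge_sqrt_quadratic
  (LieF B ft x + muB k xs us z sn x 0 + gam (B x))
  (((aug 0)^T *m SigmaB k xs us sn x *m aug 0) 0 0)
  (((aug 0)^T *m SigmaB k xs us sn x *m col_mx 0 e) 0 0
   + ((col_mx 0 e)^T *m SigmaB k xs us sn x *m aug 0) 0 0)
  p0_norm_gt0 Hbeta neg_lam_gt0 p0_norm_sqr.
have safe alpha : amin < alpha -> socp_constraint k xs us z sn beta gam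
    (LieF B ft x) (LieG B gt x) (B x) x ((alpha * Num.sg p0) *: e).
  move=> lt_amin_alpha; apply/socp_constraint_scale; rewrite sigmaB_scale.
  rewrite -/p0 -/q exprMn sqr_sg p0_neq0 mulr1 -[alpha * _ * p0]mulrA -normrEsg.
  rewrite subr_ge0; apply: dominate => //.
  have alpha_gt0 : 0 < alpha := lt_trans amin_gt0 lt_amin_alpha.
  by rewrite !normrM normr_sg p0_neq0 mulr1 gtr0_norm.
split; last by exists amin.
by exists ((amin + 1) * Num.sg p0 *: e); apply: safe; lra.
Qed.
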